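(* Let $n\ge 2$ and let $q=(q_1,\dots,q_n)\in\mathbb{R}^n$ with $\sum_{i=1}^n q_i=1$ and $q_n\neq 0$. Let $Q_1$ be the $(n-1)\times(n-1)$ matrix with entries $(Q_1)_{ij}=q_i-\delta_{ij}$, and $Q_2$ the $(n-1)\times(n-1)$ matrix with entries $(Q_2)_{ij}=\frac{1}{q_n}(q_n\delta_{ij}+q_i)$. Let $A_0=(a_{ij})_{1\le i,j\le n-1}$ be any real $(n-1)\times(n-1)$ matrix and let $A$ be the $n\times n$ matrix whose entries are $a_{ij}$ for $i,j\le n-1$, $a_{in}=-\sum_{j=1}^{n-1}\frac{q_j}{q_n}a_{ij}$ for $i\le n-1$, and whose last row is zero. Let $\bar Q_1=(\bar q_{ij})$ be an $(n-1)\times(n-1)$ matrix such that $(\bar Q_1)^tQ_1$ is diagonal. If there exists $d=(d_1,\dots,d_{n-1})\in\mathbb{R}^{n-1}$ such that the matrix $\bar Q_1\,\mathrm{diag}(d_i)_i\,A_0\,Q_2$ is skew-symmetric, then the function $$H_D(u)=\sum_{i=1}^{n-1}d_i\Big(\sum_{k=1}^{n-1}\bar q_{ki}q_k\Big)u_i+\sum_{i=1}^{n-1}d_i\Big(\Big(\sum_{k=1}^{n-1}\bar q_{ki}q_k\Big)-\bar q_{ii}\Big)e^{u_i}$$ is a constant of motion of the vector field $\tilde X_B(u)=B\eta_q(u)$ on $\mathbb{R}^{n-1}$, where $B=-EAE^t$, and consequently $$H_D\circ\phi^{-1}(x)=\sum_{i=1}^{n-1}d_i\Big(\sum_{k=1}^{n-1}\bar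 q_{ki}q_k\Big)\log\Big(\frac{x_i}{x_n}\Big)+\sum_{i=1}^{n-1}d_i\Big(\Big(\sum_{k=1}^{n-1}\bar q_{ki}q_k\Big)-\bar q_{ii}\Big)\frac{x_i}{x_n}$$ is a constant of motion of the replicator vector field $X_A$ on the interior of $\Delta^{n-1}$.
   Context: $\Delta^{n-1}=\{x\in\mathbb{R}^n: x_i\ge 0,\ \sum_i x_i=1\}$. The replicator vector field with payoff matrix $A$ is $X_A(x)_i=x_i\big((Ax)_i-x^tAx\big)$ on $\Delta^{n-1}$. $E=[-I_{n-1}\mid\mathbb{1}]$ is the $(n-1)\times n$ matrix whose row $i$ has $-1$ in column $i$, $1$ in column $n$ and zeros elsewhere. $\eta_q(u)_i=q_i-\frac{e^{u_i}}{1+\sum_{j=1}^{n-1}e^{u_j}}$ for $u\in\mathbb{R}^{n-1}$, $1\le i\le n-1$. $\phi:\mathbb{R}^{n-1}\to(\Delta^{n-1})^\circ$ is the diffeomorphism $\phi(u)=\big(\frac{e^{u_1}}{1+\sum_j e^{u_j}},\dots,\frac{e^{u_{n-1}}}{1+\sum_j e^{u_j}},\frac{1}{1+\sum_j e^{u_j}}\big)$, so $\phi^{-1}(x)=(\log(x_i/x_n))_{i\le n-1}$; $\tilde X_B$ is the pullback of $X_A$ by $\phi$. A constant of motion is a function constant along integral curves. *)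

From HB Require Import structures.
From mathcomp Require Import all_boot all_order all_algebra.
From mathcomp Require Import all_classical all_reals all_analysis.
Set Implicit Arguments. Unset Strict Implicit. Unset Printing Implicit Defensive.
Import Order.TTheory GRing.Theory Num.Theory.
Import numFieldNormedType.Exports.
Local Open Scope classical_set_scope.
Local Open Scope ring_scope.

(* Convention: n = m.+1 (so n >= 2 iff 0 < m).  Indices 1..n-1 are 'I_m,
   indices 1..n are 'I_m.+1, the index n is ord_max. *)
Section Defs.
Variable R : realType.
Variable m : nat.

Definition iw (i : 'I_m) : 'I_m.+1 := widen_ord (leqnSn m) i.

Definition qs (q : 'I_m.+1 -> R) (i : 'I_m) : R := q (iw i).

Definition Q1 (q : 'I_m.+1 -> R) : 'M[R]_m :=
  \matrix_(i, j) (qs q i - (i == j)%:R).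

Definition Q2 (q : 'I_m.+1 -> R) : 'M[R]_m :=
  \matrix_(i, j) ((q ord_max * (i == j)%:R + qs q i) / q ord_max).

Definition Aext (q : 'I_m.+1 -> R) (A0 : 'M[R]_m) : 'M[R]_m.+1 :=
  \matrix_(i, j)
    match unlift ord_max i, unlift ord_max j with
    | Some i', Some j' => A0 i' j'
    | Some i', None => - \sum_(k < m) (qs q k / q ord_max) * A0 i' k
    | None, _ => 0
    end.

Definition Emx : 'M[R]_(m, m.+1) :=
  \matrix_(i, j) (if j == ord_max then 1 else if j == iw i then -1 else 0).

Definition Bmx (q : 'I_m.+1 -> R) (A0 : 'M[R]_m) : 'M[R]_m :=
  - (Emx *m Aext q A0 *m Emx^T).

Definition eta (q : 'I_m.+1 -> R) (u : 'I_m -> R) (i : 'I_m) : R :=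
  qs q i - expR (u i) / (1 + \sum_(j < m) expR (u j)).

Definition XtB (q : 'I_m.+1 -> R) (A0 : 'M[R]_m) (u : 'I_m -> R) (i : 'I_m) : R :=
  \sum_(j < m) Bmx q A0 i j * eta q u j.

Definition XA (A : 'M[R]_m.+1) (x : 'I_m.+1 -> R) (i : 'I_m.+1) : R :=
  x i * (\sum_(j < m.+1) A i j * x j
         - \sum_(k < m.+1) \sum_(j < m.+1) x k * A k j * x j).

Definition simplex_int : set ('I_m.+1 -> R) :=
  [set x | (forall i, 0 < x i) /\ \sum_(i < m.+1) x i = 1].

Definition cq (q : 'I_m.+1 -> R) (Qb : 'M[R]_m) (i : 'I_m) : R :=
  \sum_(k < m) Qb k i * qs q k.

Definition HD (q : 'I_m.+1 -> R) (Qb : 'M[R]_m) (d : 'rV[R]_m) (u : 'I_m -> R) : R :=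
  \sum_(i < m) d 0 i * cq q Qb i * u i
  + \sum_(i < m) d 0 i * (cq q Qb i - Qb i i) * expR (u i).

Definition HDx (q : 'I_m.+1 -> R) (Qb : 'M[R]_m) (d : 'rV[R]_m) (x : 'I_m.+1 -> R) : R :=
  \sum_(i < m) d 0 i * cq q Qb i * ln (x (iw i) / x ord_max)
  + \sum_(i < m) d 0 i * (cq q Qb i - Qb i i) * (x (iw i) / x ord_max).

End Defs.

Definition constant_of_motion {R : realType} {k : nat}
  (D : set ('I_k -> R)) (X : ('I_k -> R) -> ('I_k -> R)) (H : ('I_k -> R) -> R) :=
  forall (a b : R) (u : R -> 'I_k -> R),
    (forall t, a < t < b ->
       D (u t) /\ forall i, is_derive t 1 (fun s => u s i) (X (u t) i)) ->
    forall s t, a < s < b -> a < t < b -> H (u s) = H (u t).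

From Pilot Require Import Defs.
From HB Require Import structures.
From mathcomp Require Import all_boot all_order all_algebra.
From mathcomp Require Import all_classical all_reals all_analysis.
From mathcomp Require Import ring.
Import Order.TTheory GRing.Theory Num.Theory.
Set Implicit Arguments. Unset Strict Implicit. Unset Printing Implicit Defensive.
Local Open Scope classical_set_scope.
Local Open Scope ring_scope.

(* Put lambda(u) = 1 + sum_j e^{u_j} and v = lambda(u) eta_q(u).  Computing
   B = -E A E^t gives B = -A0 Q2, so X~_B(u) = -lambda(u)^-1 A0 Q2 v^t.  Since
   Qb^t Q1 is diagonal, every off-diagonal entry of column i of Qb equals
   c_i = sum_k Qb_ki q_k, and this turns grad H_D(u) into v Qb diag(d).  Hence
   grad H_D . X~_B = -lambda^-1 v M v^t with M = Qb diag(d) A0 Q2 skew-symmetric,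
   which vanishes.  For the replicator field, u_i = log (x_i / x_n) maps integral
   curves of X_A in the open simplex to integral curves of X~_B: the last row of
   A is zero, and lambda(u) = 1 / x_n because x sums to 1. *)

Lemma skew_mx_quad_form0 (F : numDomainType) n (M : 'M[F]_n) (v : 'rV[F]_n) :
  M^T = - M -> (v *m M *m v^T) 0 0 = 0.
Proof.
move=> skewM; apply/eqP; rewrite -eqNr; apply/eqP.
transitivity ((v *m M *m v^T)^T 0 0); last by rewrite mxE.
rewrite !trmx_mul trmxK skewM.
by rewrite mulNmx mulmxN mulmxA [RHS]mxE.
Qed.

Lemma sum_delta_mul (V : pzSemiRingType) (I : finType) (i : I) (F : I -> V) :
  \sum_j (j == i)%:R * F j = F i.
Proof.
rewrite (bigD1 i) //= eqxx mul1r big1 ?addr0 // => j /negbTE ->.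
by rewrite mul0r.
Qed.

Section Emx.
Variables (R : realType) (m : nat).

Lemma iw_lift (i : 'I_m) : iw i = lift ord_max i.
Proof. by apply: val_inj; rewrite /= /bump leqNgt ltn_ord. Qed.

Lemma iw_neq_max (i : 'I_m) : (iw i == ord_max) = false.
Proof. by rewrite iw_lift eq_sym (negbTE (neq_lift _ _)). Qed.

Lemma Emx_E (i : 'I_m) (j : 'I_m.+1) :
  Emx R m i j = (j == ord_max)%:R - (j == iw i)%:R.
Proof.
rewrite mxE; case: eqP => [->|_]; first by rewrite eq_sym iw_neq_max subr0.
by case: eqP => _ /=; ring.
Qed.

Lemma mulEmx p (M : 'M[R]_(m.+1, p)) i k :
  (Emx R m *m M) i k = M ord_max k - M (iw i) k.
Proof.
rewrite mxE; under eq_bigr do rewrite Emx_E mulrBl.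
by rewrite sumrB !sum_delta_mul.
Qed.

Lemma mulmx_trEmx p (M : 'M[R]_(p, m.+1)) i j :
  (M *m (Emx R m)^T) i j = M i ord_max - M i (iw j).
Proof.
have -> : M *m (Emx R m)^T = (Emx R m *m M^T)^T by rewrite trmx_mul trmxK.
by rewrite mxE mulEmx !mxE.
Qed.

End Emx.

Section ReplicatorModel.
Variables (R : realType) (m : nat) (q : 'I_m.+1 -> R).

Lemma Aext_iw (A0 : 'M[R]_m) i k : Aext q A0 (iw i) (iw k) = A0 i k.
Proof. by rewrite mxE !iw_lift !liftK. Qed.

Lemma Aext_iw_max (A0 : 'M[R]_m) i :
  Aext q A0 (iw i) ord_max = - \sum_(k < m) qs q k / q ord_max * A0 i k.
Proof. by rewrite mxE iw_lift liftK unlift_none. Qed.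

Lemma Aext_max (A0 : 'M[R]_m) k : Aext q A0 ord_max k = 0.
Proof. by rewrite mxE unlift_none. Qed.

(* For r = exp \o u this is (1 + sum_j e^{u_j}) eta_q(u);
   clearing the positive denominator keeps the algebra below polynomial in r. *)
Definition eta_row (r : 'I_m -> R) : 'rV[R]_m :=
  \row_k ((1 + \sum_(j < m) r j) * qs q k - r k).

Lemma expR_mass_gt0 (u : 'I_m -> R) : 0 < 1 + \sum_(j < m) expR (u j).
Proof. by rewrite ltr_pwDl // sumr_ge0 // => j _; rewrite expR_ge0. Qed.

Lemma eta_eta_row u k :
  Defs.eta q u k
  = (1 + \sum_(j < m) expR (u j))^-1 * eta_row (fun j => expR (u j)) 0 k.
Proof. by rewrite mxE /Defs.eta; field; rewrite gt_eqF ?expR_mass_gt0. Qed.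

Definition log_ratio (x : 'I_m.+1 -> R) : 'I_m -> R :=
  fun i => ln (x (iw i) / x ord_max).

Hypothesis qn_neq0 : q ord_max != 0.

Lemma Q2E i j : Q2 q i j = (i == j)%:R + qs q i / q ord_max.
Proof. by rewrite mxE; field. Qed.

Lemma Bmx_eq (A0 : 'M[R]_m) : Bmx q A0 = - (A0 *m Q2 q).
Proof.
apply/matrixP => i j; rewrite [LHS]mxE [RHS]mxE mulmx_trEmx !mulEmx.
rewrite !Aext_max Aext_iw Aext_iw_max mxE; congr (- _).
under [RHS]eq_bigr do rewrite Q2E mulrDr [A0 i _ * _%:R]mulrC [A0 i _ * _]mulrC.
by rewrite big_split sum_delta_mul /=; ring.
Qed.

Lemma XtB_mx (A0 : 'M[R]_m) u i :
  XtB q A0 u i = - (1 + \sum_(j < m) expR (u j))^-1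
                   * (A0 *m Q2 q *m (eta_row (fun j => expR (u j)))^T) i 0.
Proof.
rewrite /XtB Bmx_eq mxE mulNr mulr_sumr -sumrN; apply: eq_bigr => j _.
by rewrite eta_eta_row !mxE; ring.
Qed.

Hypothesis q_sum1 : \sum_(i < m.+1) q i = 1.

Lemma sum_qs : \sum_(k < m) qs q k = 1 - q ord_max.
Proof. by move: q_sum1; rewrite big_ord_recr /= => <-; rewrite addrK. Qed.

Lemma Q2_eta_row r j :
  (Q2 q *m (eta_row r)^T) j 0 = qs q j / q ord_max - r j.
Proof.
rewrite mxE; under eq_bigr do rewrite Q2E eq_sym mulrDl !mxE.
rewrite big_split sum_delta_mul /= -mulr_sumr sumrB -mulr_sumr sum_qs.
by field.
Qed.

Lemma XtB_eq (A0 : 'M[R]_m) u i :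
  XtB q A0 u i = (1 + \sum_(j < m) expR (u j))^-1
                   * \sum_(j < m) A0 i j * (expR (u j) - qs q j / q ord_max).
Proof.
rewrite XtB_mx -mulmxA mxE mulNr -mulrN -sumrN; congr (_ * _).
by apply: eq_bigr => j _; rewrite Q2_eta_row -mulrN opprB.
Qed.

Lemma Aext_mul_simplex (A0 : 'M[R]_m) x i : simplex_int x ->
  \sum_(j < m.+1) Aext q A0 (iw i) j * x j = XtB q A0 (log_ratio x) i.
Proof.
move=> [x_gt0 x_sum1]; have xn_neq0 : x ord_max != 0 by rewrite gt_eqF.
have exp_log j : expR (log_ratio x j) = x (iw j) / x ord_max.
  by rewrite lnK // posrE divr_gt0.
have mass : 1 + \sum_(j < m) expR (log_ratio x j) = (x ord_max)^-1.
  under eq_bigr do rewrite exp_log.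
  have -> : \sum_(j < m) x (iw j) / x ord_max = (1 - x ord_max) / x ord_max.
    by rewrite -mulr_suml -x_sum1 big_ord_recr addrK.
  by field.
rewrite XtB_eq mass big_ord_recr /= Aext_iw_max mulr_sumr mulNr mulr_suml.
rewrite -sumrB; apply: eq_bigr => j _.
by rewrite -[widen_ord _ j]/(iw j) Aext_iw exp_log invrK; field; rewrite qn_neq0 xn_neq0.
Qed.

End ReplicatorModel.

Section Invariant.
Variables (R : realType) (m : nat) (q : 'I_m.+1 -> R) (A0 Qb : 'M[R]_m) (d : 'rV[R]_m).
Hypothesis Q1_Qb_diag : is_diag_mx (Qb^T *m Q1 q).

Lemma Qb_offdiag k i : k != i -> Qb k i = cq q Qb i.
Proof.
move=> neq_ki; have := is_diag_mxP Q1_Qb_diag i k.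
rewrite eq_sym neq_ki => /(_ isT) /eqP.
rewrite mxE; under eq_bigr do rewrite !mxE mulrBr.
rewrite sumrB; under [X in _ - X]eq_bigr do rewrite mulrC.
by rewrite sum_delta_mul subr_eq0 => /eqP <-; apply: eq_bigr => l _; rewrite mulrC.
Qed.

Lemma eta_row_Qb r i :
  (eta_row q r *m Qb) 0 i = cq q Qb i + (cq q Qb i - Qb i i) * r i.
Proof.
rewrite mxE; under eq_bigr do rewrite mxE mulrBl mulrAC -mulrA.
rewrite sumrB -mulr_sumr.
have -> : \sum_(k < m) r k * Qb k i
          = r i * Qb i i + cq q Qb i * (\sum_(j < m) r j - r i).
  rewrite (bigD1 i) //= [\sum_(j < m) r j](bigD1 i) //= addrAC subrr add0r mulr_sumr.
  by congr (_ + _); apply: eq_bigr => k ki; rewrite Qb_offdiag // mulrC.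
by rewrite -/(cq q Qb i); ring.
Qed.

Hypothesis qn_neq0 : q ord_max != 0.
Hypothesis skew : (Qb *m diag_mx d *m A0 *m Q2 q)^T = - (Qb *m diag_mx d *m A0 *m Q2 q).

Lemma HD_grad_XtB_orthogonal u :
  \sum_(i < m) d 0 i * (cq q Qb i + (cq q Qb i - Qb i i) * expR (u i)) * XtB q A0 u i = 0.
Proof.
set v := eta_row q (fun j => expR (u j)).
transitivity (- (1 + \sum_(j < m) expR (u j))^-1
                * (v *m (Qb *m diag_mx d *m A0 *m Q2 q) *m v^T) 0 0).
  have -> : v *m (Qb *m diag_mx d *m A0 *m Q2 q) *m v^T
            = v *m Qb *m diag_mx d *m (A0 *m Q2 q *m v^T) by rewrite !mulmxA.
  rewrite mxE mulr_sumr; apply: eq_bigr => i _.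
  by rewrite /v mul_mx_diag mxE eta_row_Qb (XtB_mx qn_neq0); ring.
by rewrite (skew_mx_quad_form0 _ skew) mulr0.
Qed.

End Invariant.

Section Flows.
Variable R : realType.
Implicit Types (f g : R -> R) (t : R).

Lemma is_derive_sum_pt n (F : 'I_n -> R -> R) (dF : 'I_n -> R) t :
  (forall i, is_derive t 1 (F i) (dF i)) ->
  is_derive t 1 (fun s => \sum_(i < n) F i s) (\sum_(i < n) dF i).
Proof. by move=> dF_F; have := is_derive_sum dF_F; rewrite fct_sumE. Qed.

Lemma is_derive_ln_ratio f g (df dg t : R) : 0 < f t -> 0 < g t ->
  is_derive t 1 f df -> is_derive t 1 g dg ->
  is_derive t 1 (fun s => ln (f s / g s)) (df / f t - dg / g t).
Proof.
move=> f_gt0 g_gt0 df_f dg_g.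
have g_neq0 : g t != 0 by rewrite gt_eqF.
have d_ratio : is_derive t 1 (fun s => f s / g s)
    (f t * (- g t ^- 2 * dg) + (g t)^-1 * df).
  exact: is_deriveM df_f (is_deriveV g_neq0 dg_g).
have d_ln : is_derive t 1 (fun s => ln (f s / g s))
    ((f t / g t)^-1 * (f t * (- g t ^- 2 * dg) + (g t)^-1 * df)).
  exact: (@is_derive1_comp R (@ln R) (fun s => f s / g s) t _ _
           (is_derive1_ln (divr_gt0 f_gt0 g_gt0)) d_ratio).
by apply: is_derive_eq d_ln _; field; rewrite g_neq0 gt_eqF.
Qed.

Lemma derive0_constant_on_itv (h : R -> R) (a b : R) :
  (forall t, a < t < b -> is_derive t 1 h 0) ->
  forall s t, a < s < b -> a < t < b -> h s = h t.
Proof.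
move=> h'0 s t; wlog le_st : s t / s <= t.
  move=> H hs ht; case: (leP s t) => [st|/ltW ts]; first exact: H.
  exact/esym/H.
move=> /andP[a_s s_b] /andP[a_t t_b].
have in_ab x : s <= x <= t -> a < x < b.
  by move=> /andP[sx xt]; rewrite (lt_le_trans a_s sx) (le_lt_trans xt t_b).
have [c _] : exists2 c, c \in `[s, t] & h t - h s = 0 * (t - s).
  apply: (MVT_segment le_st) => [x|].
    by rewrite in_itv /= => /andP[sx xt]; apply/h'0/in_ab; rewrite !ltW.
  apply: derivable_within_continuous => x; rewrite in_itv /= => /in_ab /h'0.
  by case.
by rewrite mul0r => /eqP; rewrite subr_eq0 => /eqP.
Qed.

Lemma constant_of_motion_derive0 k (D : set ('I_k -> R)) X (H : ('I_k -> R) -> R) :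
  (forall (u : R -> 'I_k -> R) t, D (u t) ->
     (forall i, is_derive t 1 (fun s => u s i) (X (u t) i)) ->
     is_derive t 1 (H \o u) 0) ->
  constant_of_motion D X H.
Proof.
move=> dH a b u u_sol s t s_ab t_ab.
apply: (derive0_constant_on_itv (h := H \o u)) s_ab t_ab => t' /u_sol[].
exact: dH.
Qed.

Lemma constant_of_motion_transport k l (D : set ('I_k -> R)) X
    (Y : ('I_l -> R) -> 'I_l -> R) (H : ('I_l -> R) -> R) (G : ('I_k -> R) -> R)
    (f : ('I_k -> R) -> 'I_l -> R) :
  constant_of_motion setT Y H ->
  (forall x, D x -> G x = H (f x)) ->
  (forall (x : R -> 'I_k -> R) t, D (x t) ->
     (forall i, is_derive t 1 (fun s => x s i) (X (x t) i)) ->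
     forall j, is_derive t 1 (fun s => f (x s) j) (Y (f (x t)) j)) ->
  constant_of_motion D X G.
Proof.
move=> H_com GE f_sol a b x x_sol s t s_ab t_ab.
have [Dxs _] := x_sol s s_ab; have [Dxt _] := x_sol t t_ab.
rewrite !GE //; apply: (H_com a b (fun s => f (x s))) => // t' /x_sol[Dx dx].
by split => //; exact: f_sol.
Qed.

Lemma replicator_log_ratio n (A : 'M[R]_n.+1) (x : 'I_n.+1 -> R) i j :
  x i != 0 -> x j != 0 ->
  XA A x i / x i - XA A x j / x j = \sum_k A i k * x k - \sum_k A j k * x k.
Proof. by move=> xi_neq0 xj_neq0; rewrite /XA; field; rewrite xi_neq0 xj_neq0. Qed.

End Flows.

Section ConstantsOfMotion.
Variables (R : realType) (m : nat) (q : 'I_m.+1 -> R) (A0 Qb : 'M[R]_m) (d : 'rV[R]_m).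

Lemma is_derive_HD (u : R -> 'I_m -> R) (du : 'I_m -> R) (t : R) :
  (forall i, is_derive t 1 (fun s => u s i) (du i)) ->
  is_derive t 1 (fun s => HD q Qb d (u s))
    (\sum_(i < m) d 0 i * (cq q Qb i + (cq q Qb i - Qb i i) * expR (u t i)) * du i).
Proof.
move=> du_u.
have dexp i : is_derive t 1 (fun s => expR (u s i)) (expR (u t i) * du i).
  exact: (@is_derive1_comp R expR (fun s => u s i) t _ _ (is_derive_expR _) (du_u i)).
have dHD : is_derive t 1 (fun s => HD q Qb d (u s))
    (\sum_(i < m) d 0 i * cq q Qb i * du i
     + \sum_(i < m) d 0 i * (cq q Qb i - Qb i i) * (expR (u t i) * du i)).
  exact: is_deriveD (is_derive_sum_pt (fun i => is_deriveZ _ (du_u i)))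
                    (is_derive_sum_pt (fun i => is_deriveZ _ (dexp i))).
by apply: is_derive_eq dHD _; rewrite -big_split; apply: eq_bigr => i _ /=; ring.
Qed.

Lemma HDx_log_ratio x : (forall i, 0 < x i) -> HDx q Qb d x = HD q Qb d (log_ratio x).
Proof.
move=> x_gt0; rewrite /HDx /HD; congr (_ + _); apply: eq_bigr => i _.
by rewrite /log_ratio lnK // posrE divr_gt0.
Qed.

Hypotheses (q_sum1 : \sum_(i < m.+1) q i = 1) (qn_neq0 : q ord_max != 0).
Hypotheses (Q1_Qb_diag : is_diag_mx (Qb^T *m Q1 q))
  (skew : (Qb *m diag_mx d *m A0 *m Q2 q)^T = - (Qb *m diag_mx d *m A0 *m Q2 q)).

Theorem HD_constant_of_motion : constant_of_motion setT (XtB q A0) (HD q Qb d).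
Proof.
apply: constant_of_motion_derive0 => u t _ du_u.
apply: is_derive_eq (is_derive_HD du_u) _.
exact: HD_grad_XtB_orthogonal.
Qed.

Theorem HDx_constant_of_motion :
  constant_of_motion (@simplex_int R m) (XA (Aext q A0)) (HDx q Qb d).
Proof.
apply: (constant_of_motion_transport (X := XA (Aext q A0))
         HD_constant_of_motion (f := @log_ratio R m)).
  by move=> x [x_gt0 _]; exact: HDx_log_ratio.
move=> x t x_simplex dx j; have [x_gt0 _] := x_simplex.
apply: is_derive_eq (is_derive_ln_ratio (x_gt0 _) (x_gt0 _) (dx (iw j)) (dx ord_max)) _.
rewrite replicator_log_ratio ?gt_eqF // [X in _ - X]big1 ?subr0 => [|k _].
  exact: Aext_mul_simplex.
by rewrite Aext_max mul0r.
Qed.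

End ConstantsOfMotion.

Theorem corollary3p2 (R : realType) (m : nat) (hm : (0 < m)%N)
  (q : 'I_m.+1 -> R) (hq1 : \sum_(i < m.+1) q i = 1) (hqn : q ord_max != 0)
  (A0 : 'M[R]_m) (Qb : 'M[R]_m)
  (hQb : is_diag_mx (Qb^T *m Q1 q))
  (d : 'rV[R]_m)
  (hskew : (Qb *m diag_mx d *m A0 *m Q2 q)^T = - (Qb *m diag_mx d *m A0 *m Q2 q)) :
  constant_of_motion setT (XtB q A0) (HD q Qb d) /\
  constant_of_motion (@simplex_int R m) (XA (Aext q A0)) (HDx q Qb d).
Proof.
split; [exact: HD_constant_of_motion | exact: HDx_constant_of_motion].
Qed.
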